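(* Let $f(x)=a_nx^n+a_{n-1}x^{n-1}+\dots+a_1x+a_0\in\mathbb{Z}[x]$, where $n$ is not divisible by $3$. Suppose that there exists a prime $p$ such that $p\nmid a_n$, $p^3\mid a_i$ for all $0\leq i\leq n-1$, and $p^4\nmid a_0$. Then $f(x)$ is irreducible over $\mathbb{Z}$.
   Context: A nonconstant polynomial in $\mathbb{Z}[x]$ is called reducible over $\mathbb{Z}$ if it can be written as a product of two nonconstant polynomials in $\mathbb{Z}[x]$; otherwise it is irreducible over $\mathbb{Z}$. *)

From mathcomp Require Import all_boot all_order all_algebra.
Set Implicit Arguments. Unset Strict Implicit. Unset Printing Implicit Defensive.
Import GRing.Theory Num.Theory.
Local Open Scope ring_scope.

Definition reducible_over_Z (f : {poly int}) : Prop :=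
  exists g h : {poly int}, (1 < size g)%N /\ (1 < size h)%N /\ f = g * h.

Definition irreducible_over_Z (f : {poly int}) : Prop :=
  (1 < size f)%N /\ ~ reducible_over_Z f.

From mathcomp Require Import all_boot all_order all_algebra.
From mathcomp Require Import zify.
Set Implicit Arguments.
Unset Strict Implicit.
Unset Printing Implicit Defensive.
Import GRing.Theory Num.Theory.
Local Open Scope ring_scope.

(* Newton-polygon (Eisenstein-Dumas) argument, valid for any exponent s
   coprime to n in place of 3.  Give the monomial a_i x^i the weight
   n v_p(a_i) + s i.  The least weight of a polynomial is additive under
   multiplication (the Gauss-lemma argument, looking at the lowest index of
   least weight in each factor), and the least weight of f is sn.  A factor g
   of degree k with v_p(g_0) = a has least weight at most min(na, sk), and
   likewise for the cofactor, so additivity forces na = sk; then n divides k,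
   which is impossible for 0 < k < n. *)

Definition zlogn (p : nat) (x : int) : nat := logn p `|x|.

Section ZLogn.

Variable p : nat.
Hypothesis p_pr : prime p.

Lemma pfactor_dvdz (x : int) e :
  x != 0 -> ((p ^ e)%N%:Z %| x)%Z = (e <= zlogn p x)%N.
Proof. by move=> x_neq0; rewrite dvdzE /= pfactor_dvdn // absz_gt0. Qed.

Lemma zlognM (x y : int) :
  x != 0 -> y != 0 -> zlogn p (x * y) = (zlogn p x + zlogn p y)%N.
Proof. by move=> x_neq0 y_neq0; rewrite /zlogn abszM lognM // absz_gt0. Qed.

Lemma zlogn_eq (x : int) e :
  ((p ^ e)%N%:Z %| x)%Z -> ~~ ((p ^ e.+1)%N%:Z %| x)%Z -> zlogn p x = e.
Proof.
have [-> _|x_neq0] := eqVneq x 0; first by rewrite dvdz0.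
rewrite !pfactor_dvdz // -ltnNge => le_e lt_e1.
by apply/eqP; rewrite eqn_leq le_e -ltnS lt_e1.
Qed.

End ZLogn.

Section Weight.

Variables (p A B : nat).

Definition weight (q : {poly int}) (i : nat) : nat :=
  (A * zlogn p q`_i + B * i)%N.

Definition weight_lb (q : {poly int}) (w : nat) : Prop :=
  forall i, q`_i != 0 -> (w <= weight q i)%N.

Definition lowest_min_weight (q : {poly int}) (w I : nat) : Prop :=
  [/\ q`_I != 0, weight q I = w, weight_lb q w
    & forall i, (i < I)%N -> q`_i != 0 -> (w < weight q i)%N].

Lemma exists_lowest_min_weight (q : {poly int}) :
  q != 0 -> exists w I, lowest_min_weight q w I.
Proof.
move=> q_neq0.
have lt_last : ((size q).-1 < size q)%N by rewrite prednK // size_poly_gt0.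
have last_neq0 : q`_(Ordinal lt_last) != 0 by rewrite -lead_coefE lead_coef_eq0.
case: (@arg_minnP _ _ (fun i : 'I_(size q) => q`_i != 0) (fun i => weight q i)
  last_neq0) => j qj_neq0 j_min.
have q_lb : weight_lb q (weight q j).
  move=> i qi_neq0; have [i_big|i_lt] := leqP (size q) i.
    by rewrite nth_default ?eqxx in qi_neq0.
  exact: (j_min (Ordinal i_lt)).
have [|I /andP[qI_neq0 /eqP wI] I_min] :=
  ex_minnP (ex_intro (fun i => (q`_i != 0) && (weight q i == weight q j)) j _).
  by rewrite qj_neq0 eqxx.
exists (weight q j), I; split => // i lt_iI qi_neq0.
rewrite ltn_neqAle q_lb // andbT; apply: contraTneq lt_iI => wi.
by rewrite -leqNgt I_min // qi_neq0 wi eqxx.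
Qed.

Hypotheses (p_pr : prime p) (A_gt0 : (0 < A)%N).

Lemma lowest_min_weight_mul (g h : {poly int}) wg wh Ig Ih :
  lowest_min_weight g wg Ig -> lowest_min_weight h wh Ih ->
  (g * h)`_(Ig + Ih) != 0 /\ weight (g * h) (Ig + Ih) = (wg + wh)%N.
Proof.
move=> [gI_neq0 wgI g_lb g_lt] [hI_neq0 whI h_lb h_lt].
set e := (zlogn p g`_Ig + zlogn p h`_Ih)%N.
have off_diag j : (j <= Ig + Ih)%N -> j != Ig ->
    g`_j != 0 -> h`_(Ig + Ih - j) != 0 ->
    (e < zlogn p g`_j + zlogn p h`_(Ig + Ih - j))%N.
  move=> le_j ne_j gj_neq0 hj_neq0; rewrite -(ltn_pmul2l A_gt0) /e.
  have B_split : (B * j + B * (Ig + Ih - j) = B * Ig + B * Ih)%N.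
    by rewrite -!mulnDr subnKC.
  move: (g_lb _ gj_neq0) (h_lb _ hj_neq0); rewrite -wgI -whI /weight.
  case: (ltngtP j Ig) ne_j => // [lt_j|gt_j] _.
    by move: (g_lt _ lt_j gj_neq0); rewrite -wgI /weight; lia.
  have lt_j' : (Ig + Ih - j < Ih)%N by lia.
  by move: (h_lt _ lt_j' hj_neq0); rewrite -whI /weight; lia.
have lt_Ig : (Ig < (Ig + Ih).+1)%N by rewrite ltnS leq_addr.
rewrite /weight coefM (bigD1 (Ordinal lt_Ig)) //= addKn.
set r := \sum_(_ | _) _.
have dvd_r : ((p ^ e.+1)%N%:Z %| r)%Z.
  apply: rpred_sum => -[j lt_j] /= ne_j.
  have {}ne_j : j != Ig by apply: contra ne_j => /eqP eq_j; apply/eqP/val_inj.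
  have [->|gj_neq0] := eqVneq g`_j 0; first by rewrite mul0r dvdz0.
  have [->|hj_neq0] := eqVneq h`_(Ig + Ih - j) 0; first by rewrite mulr0 dvdz0.
  by rewrite pfactor_dvdz ?mulf_neq0 // zlognM // off_diag.
have lead_neq0 : g`_Ig * h`_Ih != 0 by rewrite mulf_neq0.
have lead_val : zlogn p (g`_Ig * h`_Ih) = e by rewrite zlognM.
have sum_ndvd : ~~ ((p ^ e.+1)%N%:Z %| g`_Ig * h`_Ih + r)%Z.
  by rewrite rpredDr // pfactor_dvdz // lead_val ltnn.
have sum_val : zlogn p (g`_Ig * h`_Ih + r) = e.
  apply: zlogn_eq => //; apply: rpredD; first by rewrite pfactor_dvdz ?lead_val.
  by apply: dvdz_trans dvd_r; rewrite dvdzE; apply/dvdn_exp2l/leqnSn.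
split; first by apply: contraNneq sum_ndvd => ->; rewrite dvdz0.
by rewrite sum_val -wgI -whI /weight /e; lia.
Qed.

Lemma weight_lb_mul (g h : {poly int}) w :
  g != 0 -> h != 0 -> weight_lb (g * h) w ->
  exists wg wh, [/\ (w <= wg + wh)%N, weight_lb g wg & weight_lb h wh].
Proof.
move=> /exists_lowest_min_weight[wg [Ig g_min]].
move=> /exists_lowest_min_weight[wh [Ih h_min]] gh_lb.
have [gh_neq0 gh_weight] := lowest_min_weight_mul g_min h_min.
exists wg, wh; split; first by rewrite -gh_weight gh_lb.
  by case: g_min.
by case: h_min.
Qed.

End Weight.

Lemma eisenstein_weight_lb n s p (f : {poly int}) :
  prime p -> (forall i, (i < n)%N -> ((p ^ s)%N%:Z %| f`_i)%Z) ->
  weight_lb p n s f (s * n).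
Proof.
move=> p_pr p_dvd_coef i fi_neq0; rewrite /weight.
have [lt_in|le_ni] := ltnP i n; last by nia.
have : (s <= zlogn p f`_i)%N by rewrite -pfactor_dvdz // p_dvd_coef.
nia.
Qed.

Lemma size_mul_pred (R : idomainType) (g h : {poly R}) :
  g != 0 -> h != 0 -> (size (g * h)).-1 = ((size g).-1 + (size h).-1)%N.
Proof.
move=> g_neq0 h_neq0; rewrite size_mul //; move: g_neq0 h_neq0.
rewrite -!size_poly_gt0; case: (size g) => // a _; case: (size h) => // b _.
by rewrite addSn addnS.
Qed.

Lemma eisenstein_factor_slope n s p (f g h : {poly int}) :
  (0 < n)%N -> size f = n.+1 -> prime p ->
  ~~ (p%:Z %| f`_n)%Z -> (forall i, (i < n)%N -> ((p ^ s)%N%:Z %| f`_i)%Z) ->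
  ~~ ((p ^ s.+1)%N%:Z %| f`_0)%Z -> f = g * h -> g != 0 -> h != 0 ->
  (n * zlogn p g`_0 = s * (size g).-1)%N.
Proof.
move=> n_gt0 size_f p_pr p_ndvd_lead p_dvd_coef p_ndvd_f0 f_eq g_neq0 h_neq0.
set k := (size g).-1; set m := (size h).-1.
have n_eq : n = (k + m)%N by rewrite -size_mul_pred // -f_eq size_f.
have lead_val x y : ~~ (p%:Z %| x * y)%Z -> zlogn p x = 0%N.
  move=> p_ndvd; apply: (zlogn_eq p_pr); first by rewrite expn0 dvd1z.
  by rewrite expn1; apply: contra p_ndvd; apply: dvdz_mulr.
have f_lead : f`_n = g`_k * h`_m.
  by rewrite -!lead_coefE -lead_coefM -f_eq lead_coefE size_f.
have gk_val : zlogn p g`_k = 0%N by apply: (lead_val _ h`_m); rewrite -f_lead.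
have hm_val : zlogn p h`_m = 0%N.
  by apply: (lead_val _ g`_k); rewrite mulrC -f_lead.
have f0_eq : f`_0 = g`_0 * h`_0 by rewrite f_eq coef0M.
have f0_neq0 : f`_0 != 0 by apply: contraNneq p_ndvd_f0 => ->; rewrite dvdz0.
have [g0_neq0 h0_neq0] : g`_0 != 0 /\ h`_0 != 0.
  by apply/andP; rewrite -negb_or -mulf_eq0 -f0_eq.
have val0_sum : (zlogn p g`_0 + zlogn p h`_0)%N = s.
  by rewrite -zlognM // -f0_eq; apply: zlogn_eq => //; apply: p_dvd_coef.
have gk_neq0 : g`_k != 0 by rewrite -lead_coefE lead_coef_eq0.
have hm_neq0 : h`_m != 0 by rewrite -lead_coefE lead_coef_eq0.
have gh_lb : weight_lb p n s (g * h) (s * n).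
  by rewrite -f_eq; exact: eisenstein_weight_lb.
have [wg [wh [w_le g_lb h_lb]]] := weight_lb_mul p_pr n_gt0 g_neq0 h_neq0 gh_lb.
move: (g_lb _ g0_neq0) (g_lb _ gk_neq0) (h_lb _ h0_neq0) (h_lb _ hm_neq0).
rewrite /weight gk_val hm_val !muln0 !addn0 !add0n => g0_w gk_w h0_w hm_w.
have sn_split : (s * n = s * k + s * m)%N by rewrite n_eq mulnDr.
have ns_split : (n * zlogn p g`_0 + n * zlogn p h`_0 = s * n)%N.
  by rewrite -mulnDr val0_sum mulnC.
clear -g0_w gk_w h0_w hm_w w_le sn_split ns_split; lia.
Qed.

Theorem eisenstein_dumas n s p (f : {poly int}) :
  (0 < n)%N -> size f = n.+1 -> coprime n s -> prime p ->
  ~~ (p%:Z %| f`_n)%Z -> (forall i, (i < n)%N -> ((p ^ s)%N%:Z %| f`_i)%Z) ->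
  ~~ ((p ^ s.+1)%N%:Z %| f`_0)%Z -> irreducible_over_Z f.
Proof.
move=> n_gt0 size_f co_ns p_pr p_ndvd_lead p_dvd_coef p_ndvd_f0.
split; first by rewrite size_f.
case=> g [h [size_g [size_h f_eq]]].
have g_neq0 : g != 0 by rewrite -size_poly_gt0 ltnW.
have h_neq0 : h != 0 by rewrite -size_poly_gt0 ltnW.
have slope_g := eisenstein_factor_slope n_gt0 size_f p_pr p_ndvd_lead p_dvd_coef
  p_ndvd_f0 f_eq g_neq0 h_neq0.
have n_eq : n = ((size g).-1 + (size h).-1)%N.
  by rewrite -size_mul_pred // -f_eq size_f.
have : (n %| (size g).-1)%N by rewrite -(Gauss_dvdr _ co_ns) -slope_g dvdn_mulr.
move/dvdn_leq; rewrite n_eq; move: (size g) (size h) size_g size_h; lia.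
Qed.

Theorem theorem3p2 (n : nat) (f : {poly int}) (p : nat)
  (Hsize : size f = n.+1)
  (Hn3 : ~~ (3 %| n)%N)
  (Hp : prime p)
  (Hlead : ~~ (p%:Z %| f`_n)%Z)
  (Hcoef : forall i : nat, (i < n)%N -> ((p ^ 3)%N%:Z %| f`_i)%Z)
  (H0 : ~~ ((p ^ 4)%N%:Z %| f`_0)%Z) :
  irreducible_over_Z f.
Proof.
have n_gt0 : (0 < n)%N by case: n Hn3 {Hsize Hlead Hcoef H0}.
have co_n3 : coprime n 3 by rewrite coprime_sym prime_coprime.
exact: eisenstein_dumas n_gt0 Hsize co_n3 Hp Hlead Hcoef H0.
Qed.
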